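(* Let $\phi\in(0,1)$, $\alpha_\infty>0$, $K_0>0$, $\eta>0$, $\rho_f>0$, $\Lambda>0$, and set $\nu:=\eta/\rho_f$, $F:=\alpha_\infty/\phi$, $C_2:=FK_0/\nu$, $C_1:=4C_2FK_0/\Lambda^2$. For real $\omega$ define the JKD permeability $$K^D(\omega)=\frac{K_0}{\sqrt{1-\frac{4i\alpha_\infty^2K_0^2\rho_f\omega}{\eta\Lambda^2\phi^2}}-\frac{i\alpha_\infty K_0\rho_f\omega}{\eta\phi}}=\frac{K_0}{\sqrt{1-iC_1\omega}-iC_2\omega},$$ with the principal square root. Let $$\xi_p:=\frac{C_1+\sqrt{C_1^2+4C_2^2}}{2},\qquad \psi(u):=\frac{C_2\sqrt{u(C_1-u)}}{\pi\,[C_2^2+u(C_1-u)]}\ (0\le u\le C_1),\qquad r:=\frac{2C_2\sqrt{\xi_p(\xi_p-C_1)}}{2\xi_p-C_1}.$$ Then $\xi_p>C_1$, the measure $$dG(u)=\chi_{[0,C_1]}(u)\,\frac{\psi(u)}{u}\,du+\frac{r}{\xi_p}\,\delta_{\xi_p}$$ is a probability measure on $[0,\xi_p]$ (i.e. $\int_0^{C_1}\frac{\psi(u)}{u}du+\frac{r}{\xi_p}=1$), and for all real $\omega$ $$K^D(\omega)=\frac{\nu}{F}\int_0^{\xi_p}\frac{u\,dG(u)}{1-i\omega u}.$$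
   Context: $\chi_{[0,C_1]}$ is the indicator function of $[0,C_1]$, $du$ is Lebesgue measure and $\delta_{\xi_p}$ the Dirac measure at $\xi_p$. Physically $\phi$ is porosity, $\alpha_\infty$ infinite-frequency tortuosity, $K_0$ static permeability, $\eta$ dynamic viscosity, $\rho_f$ fluid density, $\Lambda$ the JKD length parameter. *)

From Stdlib Require Export Reals Lra.
Open Scope R_scope.

Definition Cx : Type := (R * R)%type.
Definition Cre (z : Cx) : R := fst z.
Definition Cim (z : Cx) : R := snd z.
Definition RtoC (a : R) : Cx := (a, 0).
Definition Ci : Cx := (0, 1).
Definition Cplus (z w : Cx) : Cx := (fst z + fst w, snd z + snd w).
Definition Copp (z : Cx) : Cx := (- fst z, - snd z).
Definition Cminus (z w : Cx) : Cx := Cplus z (Copp w).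
Definition Cmult (z w : Cx) : Cx :=
  (fst z * fst w - snd z * snd w, fst z * snd w + snd z * fst w).
Definition Cinv (z : Cx) : Cx :=
  let d := fst z * fst z + snd z * snd z in (fst z / d, - snd z / d).
Definition Cdiv (z w : Cx) : Cx := Cmult z (Cinv w).
Definition Cmod (z : Cx) : R := sqrt (fst z * fst z + snd z * snd z).

(* Principal square root: Re >= 0, and Im >= 0 on the branch cut (negative reals). *)
Definition Csqrt (z : Cx) : Cx :=
  let m := Cmod z in
  (sqrt ((m + fst z) / 2),
   (if Rlt_dec (snd z) 0 then -1 else 1) * sqrt ((m - fst z) / 2)).

Definition KD (phi alpha_inf K0 eta rho_f Lambda omega : R) : Cx :=
  Cdiv (RtoC K0)
    (Cminus
       (Csqrt (Cminus (RtoC 1)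
          (Cmult Ci (RtoC (4 * alpha_inf ^ 2 * K0 ^ 2 * rho_f * omega
                           / (eta * Lambda ^ 2 * phi ^ 2))))))
       (Cmult Ci (RtoC (alpha_inf * K0 * rho_f * omega / (eta * phi))))).

Definition improper_int_at0 (g : R -> R) (b l : R) : Prop :=
  (forall e, 0 < e < b -> inhabited (Riemann_integrable g e b)) /\
  (forall eps, 0 < eps -> exists delta, 0 < delta /\
     forall e (pr : Riemann_integrable g e b),
       0 < e < delta -> e < b -> Rabs (RiemannInt pr - l) < eps).

From Coquelicot Require Import Coquelicot.
From Stdlib Require Import Reals Lra.
Open Scope R_scope.

(* Writing
   [psi(u) = (C2 / PI) s(u) / ((xi_p - u) (u - xp))] with the semicircle
   [s(u) = sqrt (u (C1 - u))] and the two roots [xi_p > C1], [xp = C1 - xi_p < 0]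
   of [x (x - C1) = C2^2], the integrands of the mass and of the real and
   imaginary parts of the representation are partial fractions divided by
   [s(u)]: simple poles at [xi_p] and [xp], and a Lorentzian
   [(c0 + c1 u) / (1 + w^2 u^2)].  Each piece has an explicit primitive on
   [(0, C1)] (an angle [arg((al - be u) + i ga s(u))], or a logarithm) whose
   derivative blows up at the endpoints but whose values converge there. *)

(* Continuity of real expressions, specialised to [R -> R] so that a simple
   syntax-directed tactic can decompose them. *)

Lemma continuous_Rmult (f g : R -> R) x :
  continuous f x -> continuous g x -> continuous (fun y => f y * g y) x.
Proof. intros; now apply (continuous_mult f g). Qed.
Lemma continuous_Rplus (f g : R -> R) x :
  continuous f x -> continuous g x -> continuous (fun y => f y + g y) x.
Proof. intros; now apply (continuous_plus f g). Qed.
Lemma continuous_Rminus (f g : R -> R) x :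
  continuous f x -> continuous g x -> continuous (fun y => f y - g y) x.
Proof. intros; now apply (continuous_minus f g). Qed.
Lemma continuous_Rdiv (f g : R -> R) x :
  continuous f x -> continuous g x -> g x <> 0 -> continuous (fun y => f y / g y) x.
Proof.
  intros; apply (continuous_mult f (fun y => / g y)); auto.
  now apply continuous_Rinv_comp.
Qed.
Lemma continuous_Rpow2 (f : R -> R) x :
  continuous f x -> continuous (fun y => f y ^ 2) x.
Proof.
  intros. apply (continuous_ext (fun y => f y * (f y * 1))); [intros; simpl; ring|].
  apply continuous_Rmult; [|apply continuous_Rmult]; auto. apply continuous_const.
Qed.

Ltac continuity_R := repeat match goal with
  | |- continuous (fun y => _ / _) _ => apply continuous_Rdiv
  | |- continuous (fun y => _ * _) _ => apply continuous_Rmult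
  | |- continuous (fun y => _ + _) _ => apply continuous_Rplus
  | |- continuous (fun y => _ - _) _ => apply continuous_Rminus
  | |- continuous (fun y => _ ^ 2) _ => apply continuous_Rpow2
  | |- continuous (fun y => sqrt _) _ => apply continuous_sqrt_comp
  | |- continuous (fun y => atan _) _ => apply continuous_atan_comp
  | |- continuous (fun y => Rabs _) _ => apply continuous_Rabs_comp
  | |- continuous (Rminus ?c) _ => apply (continuous_Rminus (fun _ => c) (fun y => y))
  | |- continuous (Rmult ?c) _ => apply (continuous_Rmult (fun _ => c) (fun y => y))
  | |- continuous (Rplus ?c) _ => apply (continuous_Rplus (fun _ => c) (fun y => y))
  | |- continuous (fun y => y) _ => apply continuous_id
  | |- continuous (fun _ => _) _ => apply continuous_const
  end.

Lemma is_derive_div_const (f : R -> R) (x d c : R) :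
  is_derive f x d -> is_derive (fun v => f v / c) x (d / c).
Proof.
  intros H. auto_derive; [now exists d|].
  replace (Derive (fun v => f v) x) with d by (symmetry; now apply is_derive_unique).
  unfold Rdiv. ring.
Qed.

(* The primitive may blow up in
   derivative at the endpoints; only its values must converge. *)
Definition improper_primitive (f : R -> R) (a b v : R) : Prop :=
  exists F la lb, (forall x, a < x < b -> is_derive F x (f x)) /\
    filterlim F (at_right a) (locally la) /\
    filterlim F (at_left b) (locally lb) /\ v = lb - la.

Lemma continuous_at_right (h : R -> R) (a : R) :
  continuous h a -> filterlim h (at_right a) (locally (h a)).
Proof.
  intros Hh. apply (filterlim_filter_le_1 _ (F := locally a)); [|exact Hh].
  intros P HP. unfold at_right, at_left, within.
  apply (filter_imp P); [|exact HP]. now intros x Px _.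
Qed.

Lemma continuous_at_left (h : R -> R) (b : R) :
  continuous h b -> filterlim h (at_left b) (locally (h b)).
Proof.
  intros Hh. apply (filterlim_filter_le_1 _ (F := locally b)); [|exact Hh].
  intros P HP. unfold at_right, at_left, within.
  apply (filter_imp P); [|exact HP]. now intros x Px _.
Qed.

Lemma at_right_below (a y : R) : a < y -> at_right a (fun x => a < x < y).
Proof.
  intros Hay. unfold at_right, within.
  apply (filter_imp (fun x => x < y)); [|exact (open_lt y a Hay)].
  intros x Hx Hax. lra.
Qed.

Lemma at_left_above (x b : R) : x < b -> at_left b (fun y => x < y < b).
Proof.
  intros Hxb. unfold at_left, within.
  apply (filter_imp (fun y => x < y)); [|exact (open_gt x b Hxb)].
  intros y Hy Hyb. lra.
Qed.

Lemma improper_primitive_plus (f g : R -> R) (a b v w : R) :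
  improper_primitive f a b v -> improper_primitive g a b w ->
  improper_primitive (fun x => f x + g x) a b (v + w).
Proof.
  intros (F & la & lb & HF & Hla & Hlb & ->) (G & ma & mb & HG & Hma & Hmb & ->).
  exists (fun x => F x + G x), (la + ma), (lb + mb). split; [|split; [|split]].
  - intros x Hx. apply (is_derive_plus F G); auto.
  - exact (filterlim_comp_2 F G Rplus Hla Hma (filterlim_plus la ma)).
  - exact (filterlim_comp_2 F G Rplus Hlb Hmb (filterlim_plus lb mb)).
  - ring.
Qed.

Lemma improper_primitive_scal (f : R -> R) (c a b v : R) :
  improper_primitive f a b v -> improper_primitive (fun x => c * f x) a b (c * v).
Proof.
  intros (F & la & lb & HF & Hla & Hlb & ->).
  exists (fun x => c * F x), (c * la), (c * lb). split; [|split; [|split]].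
  - intros x Hx. apply (is_derive_scal F); auto.
  - exact (filterlim_comp _ _ _ F (Rmult c) _ _ _ Hla (filterlim_scal_r c la)).
  - exact (filterlim_comp _ _ _ F (Rmult c) _ _ _ Hlb (filterlim_scal_r c lb)).
  - ring.
Qed.

Lemma improper_primitive_ext (f g : R -> R) (a b v : R) :
  (forall x, a < x < b -> f x = g x) ->
  improper_primitive f a b v -> improper_primitive g a b v.
Proof.
  intros Hfg (F & la & lb & HF & Hla & Hlb & Hv).
  exists F, la, lb. split; [|auto].
  intros x Hx. rewrite <- Hfg by exact Hx. auto.
Qed.

Lemma improper_primitive_of_pair (f F G : R -> R) (a b : R) : a < b ->
  (forall x, a < x < b -> is_derive F x (f x)) ->
  (forall x, a < x < b -> F x = G x) ->
  continuous F a -> continuous G b ->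
  improper_primitive f a b (G b - F a).
Proof.
  intros Hab HF HFG HFa HGb. exists F, (F a), (G b).
  split; [exact HF|split; [|split; [|reflexivity]]].
  - now apply continuous_at_right.
  - apply (filterlim_ext_loc G F); [|now apply continuous_at_left].
    apply (filter_imp (fun y => a < y < b)); [|exact (at_left_above a b Hab)].
    intros y Hy. symmetry. auto.
Qed.

(* The clamping map onto [[a, b]], written with absolute values so that its
   continuity is immediate. *)
Definition clamp (a b t : R) : R := ((a + b) + Rabs (t - a) - Rabs (t - b)) / 2.

Lemma clamp_between (a b t : R) : a <= b -> a <= clamp a b t <= b.
Proof.
  intros Hab. unfold clamp.
  destruct (Rle_dec a t), (Rle_dec t b);
    rewrite ?(Rabs_right (t - a)), ?(Rabs_left (t - a)), ?(Rabs_right (t - b)),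
      ?(Rabs_left1 (t - b)) by lra; lra.
Qed.

Lemma clamp_id (a b t : R) : a <= t <= b -> clamp a b t = t.
Proof.
  intros Ht. unfold clamp.
  rewrite (Rabs_right (t - a)), (Rabs_left1 (t - b)) by lra. field.
Qed.

Lemma continuous_clamp (a b t : R) : continuous (clamp a b) t.
Proof. unfold clamp. continuity_R. lra. Qed.

Lemma continuous_extension (f : R -> R) (a b : R) : a <= b ->
  (forall x, a <= x <= b -> continuous f x) ->
  exists g, (forall t, continuous g t) /\ (forall t, a <= t <= b -> g t = f t).
Proof.
  intros Hab Hf. exists (fun t => f (clamp a b t)). split.
  - intros t. apply (continuous_comp (clamp a b) f);
      [apply continuous_clamp|apply Hf, clamp_between, Hab].
  - intros t Ht. now rewrite clamp_id.
Qed.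

(* Proof: extend [f] continuously to all of [R]; the integral
   [RInt g x y] equals [F y - F x] for [a < x < y < b], and both sides pass
   to the limit, first as [x -> a+], then as [y -> b-]. *)
Lemma is_RInt_improper_primitive (f : R -> R) (a b v : R) : a < b ->
  (forall x, a <= x <= b -> continuous f x) ->
  improper_primitive f a b v -> is_RInt f a b v.
Proof.
  intros Hab Hf (F & la & lb & HF & Hla & Hlb & ->).
  destruct (continuous_extension f a b ltac:(lra) Hf) as (g & Hg & Hgf).
  assert (Hint : forall x y, is_RInt g x y (RInt g x y))
    by (intros x y; apply (RInt_correct (V := R_CompleteNormedModule)),
          (ex_RInt_continuous (V := R_CompleteNormedModule)); auto).
  assert (Hmid : forall x y, a < x -> x <= y -> y < b -> RInt g x y = F y - F x).
  { intros x y Hx Hxy Hy. apply is_RInt_unique, (is_RInt_derive F g).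
    - intros t Ht. rewrite Rmin_left, Rmax_right in Ht by lra.
      rewrite Hgf by lra. apply HF. lra.
    - intros t _. apply Hg. }
  assert (Hleft : forall y, a < y < b -> RInt g a y = F y - la).
  { intros y Hy. apply (filterlim_locally_unique (F := at_right a) (fun x => RInt g x y)).
    - apply (continuous_at_right (fun x => RInt g x y) a).
      apply (continuous_RInt_2 g a y (fun x => RInt g x y)), filter_forall.
      intros z. apply Hint.
    - apply (filterlim_ext_loc (fun x => F y - F x)).
      + apply (filter_imp (fun x => a < x < y)); [|now apply at_right_below].
        intros x Hx. symmetry. apply Hmid; lra.
      + apply (filterlim_comp _ _ _ F (fun t => F y - t) _ _ _ Hla).
        apply (continuous_minus (fun _ => F y) (fun t => t));
          [apply continuous_const|apply continuous_id]. }
  assert (Hright : RInt g a b = lb - la).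
  { apply (filterlim_locally_unique (F := at_left b) (fun y => RInt g a y)).
    - apply (continuous_at_left (fun y => RInt g a y) b).
      apply (continuous_RInt_1 g a b (fun y => RInt g a y)), filter_forall.
      intros z. apply Hint.
    - apply (filterlim_ext_loc (fun y => F y - la)).
      + apply (filter_imp (fun y => a < y < b)); [|now apply at_left_above].
        intros y Hy. symmetry. now apply Hleft.
      + apply (filterlim_comp _ _ _ F (fun t => t - la) _ _ _ Hlb).
        apply (continuous_minus (fun t => t) (fun _ => la));
          [apply continuous_id|apply continuous_const]. }
  rewrite <- Hright. apply (is_RInt_ext g).
  - intros t Ht. rewrite Rmin_left, Rmax_right in Ht by lra. apply Hgf. lra.
  - apply Hint.
Qed.

Lemma improper_int_at0_of_primitive (f : R -> R) (b v : R) : 0 < b ->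
  (forall x, 0 < x <= b -> continuous f x) ->
  improper_primitive f 0 b v -> improper_int_at0 f b v.
Proof.
  intros Hb Hf (F & la & lb & HF & Hla & Hlb & Hv).
  assert (Htail : forall e, 0 < e < b -> is_RInt f e b (lb - F e)).
  { intros e He. apply is_RInt_improper_primitive; [lra|intros x Hx; apply Hf; lra|].
    exists F, (F e), lb.
    split; [intros x Hx; apply HF; lra|split; [|split; [exact Hlb|reflexivity]]].
    apply continuous_at_right, (ex_derive_continuous (K := R_AbsRing) (V := R_NormedModule)).
    exists (f e). apply HF. lra. }
  split.
  - intros e He. constructor. apply ex_RInt_Reals_0. exists (lb - F e). now apply Htail.
  - intros eps Heps.
    destruct (proj1 (filterlim_locally F la) Hla (mkposreal eps Heps)) as [d Hd].
    exists d. split; [apply cond_pos|].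
    intros e pr He Heb.
    rewrite <- (RInt_Reals _ _ _ pr), (is_RInt_unique _ _ _ _ (Htail e ltac:(lra))), Hv.
    replace (lb - F e - (lb - la)) with (- (F e - la)) by ring. rewrite Rabs_Ropp.
    apply (Hd e); [|lra]. change (Rabs (e - 0) < d). rewrite Rminus_0_r, Rabs_right; lra.
Qed.

(* The argument of [X + i Y] by the half-angle formula, in two versions:
   [arg_right] is continuous off the negative real axis, [arg_left] off the
   positive one; they agree in the upper half-plane. *)
Definition arg_right (X Y : R) : R := 2 * atan (Y / (sqrt (X ^ 2 + Y ^ 2) + X)).
Definition arg_left (X Y : R) : R := PI - 2 * atan (Y / (sqrt (X ^ 2 + Y ^ 2) - X)).

Lemma abs_lt_modulus (x y : R) : 0 < y -> Rabs x < sqrt (x ^ 2 + y ^ 2).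
Proof.
  intros Hy. rewrite <- sqrt_Rsqr_abs. apply sqrt_lt_1_alt. split.
  - apply Rle_0_sqr.
  - unfold Rsqr. nra.
Qed.

(* With [T = tan (theta / 2)] for [x + i y = S e^(i theta)], the point is
   rational in [S] and [T]; this removes the square root from derivative
   computations. *)
Lemma half_angle_param (x y S : R) : 0 < S -> S * S = x * x + y * y -> 0 < S + x ->
  let T := y / (S + x) in x = S * (1 - T^2) / (1 + T^2) /\ y = 2 * S * T / (1 + T^2).
Proof.
  intros HS HS2 HSx T.
  assert (Hy : y = T * (S + x)) by (unfold T; field; lra).
  assert (H1 : S - x = T^2 * (S + x)).
  { apply (Rmult_eq_reg_r (S + x)); [|lra].
    replace ((S - x) * (S + x)) with (S*S - x*x) by ring. rewrite HS2.
    rewrite Hy at 1 2. ring. }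
  assert (Hp : 0 < 1 + T^2) by (pose proof (pow2_ge_0 T); lra).
  assert (H2 : x * (1 + T^2) = S * (1 - T^2)) by nra.
  split.
  - rewrite <- H2. field. lra.
  - rewrite Hy at 1. replace (2 * S * T) with (T * (S * (1 - T^2) + S * (1 + T^2))) by ring.
    rewrite <- H2. field. lra.
Qed.

Lemma arg_right_derive (X Y : R -> R) (X' Y' u : R) :
  is_derive X u X' -> is_derive Y u Y' -> 0 < Y u ->
  is_derive (fun v => arg_right (X v) (Y v)) u
    ((X u * Y' - Y u * X') / (X u ^ 2 + Y u ^ 2)).
Proof.
  intros HX HY Hy. unfold arg_right.
  pose proof (abs_lt_modulus (X u) (Y u) Hy) as Hgt.
  pose proof (Rle_abs (- X u)) as HXabs. rewrite Rabs_Ropp in HXabs.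
  pose proof (Rabs_pos (X u)).
  assert (Hmod : X u * (X u * 1) + Y u * (Y u * 1) = X u ^ 2 + Y u ^ 2) by ring.
  auto_derive.
  - repeat split; try (eexists; eassumption); rewrite Hmod; nra.
  - replace (Derive (fun x => X x) u) with X' by (symmetry; now apply is_derive_unique).
    replace (Derive (fun x => Y x) u) with Y' by (symmetry; now apply is_derive_unique).
    rewrite Hmod.
    set (x := X u) in *. set (y := Y u) in *.
    set (S := sqrt (x ^ 2 + y ^ 2)) in *.
    assert (HS2 : S * S = x * x + y * y)
      by (unfold S; rewrite sqrt_sqrt; [ring|nra]).
    destruct (half_angle_param x y S ltac:(lra) HS2 ltac:(lra)) as [Ex Ey].
    set (T := y / (S + x)) in *.
    clearbody S T x y. subst x y.
    assert (0 < 1 + T ^ 2) by (pose proof (pow2_ge_0 T); lra).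
    assert (HT : 0 < T).
    { apply (Rmult_lt_reg_l (2 * S / (1 + T ^ 2))); [apply Rdiv_lt_0_compat; lra|].
      replace (2 * S / (1 + T ^ 2) * T) with (2 * S * T / (1 + T ^ 2)) by (field; lra).
      lra. }
    field. repeat split; try lra.
    all: apply Rgt_not_eq, Rlt_gt; assert (0 < S * T) by (apply Rmult_lt_0_compat; lra);
      pose proof (pow2_ge_0 (S * (1 - T ^ 2))); nra.
Qed.

Lemma arg_right_eq_left (x y : R) : 0 < y -> arg_right x y = arg_left x y.
Proof.
  intros Hy. unfold arg_right, arg_left.
  pose proof (abs_lt_modulus x y Hy) as Hgt.
  set (S := sqrt (x ^ 2 + y ^ 2)) in *.
  assert (HS2 : S * S = x ^ 2 + y ^ 2) by (unfold S; rewrite sqrt_sqrt; nra).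
  pose proof (Rle_abs x). pose proof (Rle_abs (- x)) as Hx'. rewrite Rabs_Ropp in Hx'.
  assert (Ha : 0 < y / (S + x)) by (apply Rdiv_lt_0_compat; lra).
  replace (y / (S - x)) with (/ (y / (S + x))).
  - rewrite atan_inv by exact Ha. field.
  - field_simplify_eq; [nra|repeat split; lra].
Qed.

Lemma arg_right_pos_axis (x : R) : 0 < x -> arg_right x 0 = 0.
Proof.
  intros Hx. unfold arg_right. unfold Rdiv. rewrite Rmult_0_l, atan_0. ring.
Qed.

Lemma arg_left_neg_axis (x : R) : x < 0 -> arg_left x 0 = PI.
Proof.
  intros Hx. unfold arg_left. unfold Rdiv. rewrite Rmult_0_l, atan_0. ring.
Qed.

Lemma arg_right_continuous (X Y : R -> R) (u : R) :
  continuous X u -> continuous Y u -> 0 < X u ->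
  continuous (fun v => arg_right (X v) (Y v)) u.
Proof.
  intros HX HY Hx. unfold arg_right. continuity_R; auto.
  apply Rgt_not_eq. pose proof (sqrt_pos (X u ^ 2 + Y u ^ 2)). lra.
Qed.

Lemma arg_left_continuous (X Y : R -> R) (u : R) :
  continuous X u -> continuous Y u -> X u < 0 ->
  continuous (fun v => arg_left (X v) (Y v)) u.
Proof.
  intros HX HY Hx. unfold arg_left. continuity_R; auto.
  apply Rgt_not_eq. pose proof (sqrt_pos (X u ^ 2 + Y u ^ 2)). lra.
Qed.

(* The semicircle [s(u) = sqrt (u (C1 - u))] over [[0, C1]]; [1 / s] is the
   arcsine weight against which all integrals below are computed. *)
Definition semicircle (C1 u : R) : R := sqrt (u * (C1 - u)).

Lemma semicircle_pos (C1 u : R) : 0 < u < C1 -> 0 < semicircle C1 u.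
Proof. intros Hu. apply sqrt_lt_R0. nra. Qed.

Lemma semicircle_sq (C1 u : R) : 0 <= u <= C1 ->
  semicircle C1 u * semicircle C1 u = u * (C1 - u).
Proof. intros Hu. apply sqrt_sqrt. nra. Qed.

Lemma semicircle_ends (C1 : R) : semicircle C1 0 = 0 /\ semicircle C1 C1 = 0.
Proof.
  unfold semicircle. rewrite Rmult_0_l, Rminus_diag, Rmult_0_r, sqrt_0. now split.
Qed.

Lemma semicircle_continuous (C1 u : R) : continuous (semicircle C1) u.
Proof. unfold semicircle. continuity_R. Qed.

Lemma semicircle_derive (C1 u : R) : 0 < u < C1 ->
  is_derive (semicircle C1) u ((C1 - 2 * u) / (2 * semicircle C1 u)).
Proof.
  intros Hu. pose proof (semicircle_pos C1 u Hu). unfold semicircle in *.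
  auto_derive; [nra|]. replace (C1 + - u) with (C1 - u) by ring. field. lra.
Qed.

(* The angle of [(al - be u) + i ga s(u)] as [u] runs over [(0, C1)]: it
   starts on the positive real axis and ends on the negative one, so its
   total variation is PI.  Its derivative is the "arc density" below. *)
Definition arc_density (C1 al be ga u : R) : R :=
  ga * ((al - be * u) * (C1 - 2 * u) + 2 * be * (u * (C1 - u)))
    / (2 * semicircle C1 u * ((al - be * u) ^ 2 + ga ^ 2 * (u * (C1 - u)))).

Lemma arc_primitive (C1 al be ga : R) :
  0 < C1 -> 0 < ga -> 0 < al -> al - be * C1 < 0 ->
  improper_primitive (arc_density C1 al be ga) 0 C1 PI.
Proof.
  intros HC1 Hga Hal Hend.
  set (X := fun u => al - be * u). set (Y := fun u => ga * semicircle C1 u).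
  assert (HXc : forall u, continuous X u) by (intros u; unfold X; continuity_R).
  assert (HYc : forall u, continuous Y u).
  { intros u. unfold Y. apply continuous_Rmult; [apply continuous_const|].
    apply semicircle_continuous. }
  destruct (semicircle_ends C1) as [Hs0 HsC1].
  replace PI with (arg_left (X C1) (Y C1) - arg_right (X 0) (Y 0)).
  - apply (improper_primitive_of_pair _ (fun u => arg_right (X u) (Y u))
             (fun u => arg_left (X u) (Y u))); [exact HC1| | | |].
    + intros u Hu. pose proof (semicircle_pos C1 u Hu) as Hs.
      pose proof (semicircle_sq C1 u ltac:(lra)) as Hs2.
      assert (HX : is_derive X u (- be)) by (unfold X; auto_derive; auto; ring).
      assert (HY : is_derive Y u (ga * ((C1 - 2 * u) / (2 * semicircle C1 u))))
        by (apply (is_derive_scal (semicircle C1)), semicircle_derive, Hu).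
      replace (arc_density C1 al be ga u) with
        ((X u * (ga * ((C1 - 2 * u) / (2 * semicircle C1 u))) - Y u * - be)
           / (X u ^ 2 + Y u ^ 2)).
      * apply arg_right_derive; auto. unfold Y. nra.
      * unfold arc_density, X, Y. rewrite <- Hs2.
        assert (0 < ga ^ 2 * (semicircle C1 u * semicircle C1 u)) by
          (apply Rmult_lt_0_compat; [apply pow_lt|]; nra).
        pose proof (pow2_ge_0 (al - be * u)).
        field. lra.
    + intros u Hu. apply arg_right_eq_left. unfold Y.
      apply Rmult_lt_0_compat; [exact Hga|]. now apply semicircle_pos.
    + apply arg_right_continuous; auto. unfold X. lra.
    + apply arg_left_continuous; auto.
  - unfold Y. rewrite Hs0, HsC1, Rmult_0_r.
    rewrite arg_right_pos_axis, arg_left_neg_axis; unfold X; lra.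
Qed.

(* A simple pole [p] outside [[0, C1]], written as [k^2 p = p - C1] with
   [k > 0], has density [1 / ((p - u) s(u))] of total mass [PI / (k p)]
   (that is, [PI / sqrt (p (p - C1))] up to the sign of [p]). *)
Lemma pole_primitive (C1 p k : R) : 0 < C1 -> 0 < k -> k ^ 2 * p = p - C1 ->
  improper_primitive (fun u => 1 / ((p - u) * semicircle C1 u)) 0 C1 (PI / (k * p)).
Proof.
  intros HC1 Hk Hkp.
  assert (Hp : p < 0 \/ C1 < p).
  { destruct (Rlt_dec p 0) as [Hn|Hn]; [now left|right].
    assert (0 < k ^ 2) by (apply pow_lt; lra).
    destruct (Rle_lt_dec p C1) as [Hle|Hlt]; [|exact Hlt].
    assert (0 <= k ^ 2 * p) by (apply Rmult_le_pos; lra).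
    assert (p = C1) by lra. subst p.
    assert (0 < k ^ 2 * C1) by (apply Rmult_lt_0_compat; lra). lra. }
  assert (Hkp0 : k * p <> 0) by (apply Rmult_integral_contrapositive_currified; lra).
  replace (PI / (k * p)) with (/ (k * p) * PI) by (field; split; lra).
  apply (improper_primitive_ext (fun u => / (k * p) * arc_density C1 C1 (1 + k ^ 2) (2 * k) u)).
  - intros u Hu. pose proof (semicircle_pos C1 u Hu) as Hs.
    pose proof (semicircle_sq C1 u ltac:(lra)) as Hs2.
    unfold arc_density. rewrite <- Hs2.
    assert (HC1p : C1 = p * (1 - k ^ 2)) by lra.
    assert (Hk1 : 1 - k ^ 2 <> 0) by (intros E; rewrite E in HC1p; lra).
    assert (Hpu : p - u <> 0) by lra.
    set (s := semicircle C1 u) in *. clearbody s. subst C1.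
    rewrite Hs2.
    replace ((p * (1 - k ^ 2) - (1 + k ^ 2) * u) ^ 2 + (2 * k) ^ 2 * (u * (p * (1 - k ^ 2) - u)))
      with (((1 - k ^ 2) * (p - u)) ^ 2) by ring.
    field. repeat split; lra.
  - apply improper_primitive_scal, arc_primitive; try lra.
    replace (C1 - (1 + k ^ 2) * C1) with (- (k ^ 2 * C1)) by ring.
    assert (0 < k ^ 2 * C1) by (apply Rmult_lt_0_compat; [apply pow_lt|]; lra). lra.
Qed.

(* The rational parametrisation of the semicircle, [u = C1 t^2 / (1 + t^2)],
   [s(u) = C1 t / (1 + t^2)]: it turns identities involving [s] into
   rational identities in [t]. *)
Lemma semicircle_param (C1 u : R) : 0 < u < C1 ->
  exists t, 0 < t /\ u = C1 * t ^ 2 / (1 + t ^ 2) /\ semicircle C1 u = C1 * t / (1 + t ^ 2).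
Proof.
  intros Hu. pose proof (semicircle_pos C1 u Hu) as Hs.
  pose proof (semicircle_sq C1 u ltac:(lra)) as Hs2.
  set (s := semicircle C1 u) in *. clearbody s.
  exists (s / (C1 - u)).
  assert (Ht : 0 < s / (C1 - u)) by (apply Rdiv_lt_0_compat; lra).
  set (t := s / (C1 - u)) in *.
  assert (Hst : s = t * (C1 - u)) by (unfold t; field; lra). clearbody t.
  assert (Htu : t * t * (C1 - u) = u).
  { apply (Rmult_eq_reg_r (C1 - u)); [|lra]. rewrite <- Hs2, Hst. ring. }
  assert (Hp : 0 < 1 + t ^ 2) by (pose proof (pow2_ge_0 t); lra).
  assert (Hu' : u = C1 * t ^ 2 / (1 + t ^ 2)).
  { apply (Rmult_eq_reg_r (1 + t ^ 2)); [|lra]. field_simplify; [nra|lra]. }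
  split; [exact Ht|split; [exact Hu'|]].
  rewrite Hst, Hu'. field. lra.
Qed.

(* [log_ratio] is [2 artanh (2 sg s(u) / (C1 + 2 sg^2 u))]; it vanishes at
   both ends of [[0, C1]]. *)
Definition log_ratio (C1 sg u : R) : R :=
  ln (C1 + 2 * sg ^ 2 * u + 2 * sg * semicircle C1 u)
  - ln (C1 + 2 * sg ^ 2 * u - 2 * sg * semicircle C1 u).

Lemma log_ratio_args_pos (C1 sg u : R) : 0 < C1 -> 0 <= sg -> 0 <= u <= C1 ->
  0 < C1 + 2 * sg ^ 2 * u - 2 * sg * semicircle C1 u /\
  0 < C1 + 2 * sg ^ 2 * u + 2 * sg * semicircle C1 u.
Proof.
  intros HC1 Hsg Hu.
  pose proof (semicircle_sq C1 u Hu) as Hs2.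
  pose proof (sqrt_pos (u * (C1 - u))) as Hs. fold (semicircle C1 u) in Hs.
  set (s := semicircle C1 u) in *. clearbody s.
  assert (HA : 0 < C1 + 2 * sg ^ 2 * u) by (pose proof (pow2_ge_0 sg); nra).
  assert (HB : 0 <= 2 * sg * s) by nra.
  assert (HAB : (2 * sg * s) * (2 * sg * s) < (C1 + 2 * sg ^ 2 * u) * (C1 + 2 * sg ^ 2 * u)).
  { replace ((2 * sg * s) * (2 * sg * s)) with (4 * sg ^ 2 * (s * s)) by ring. rewrite Hs2.
    assert (0 <= sg ^ 2 * u ^ 2 * (sg ^ 2 + 1))
      by (apply Rmult_le_pos; [apply Rmult_le_pos; apply pow2_ge_0|pose proof (pow2_ge_0 sg); lra]).
    assert (0 < C1 ^ 2) by (apply pow_lt; lra).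
    replace ((C1 + 2 * sg ^ 2 * u) * (C1 + 2 * sg ^ 2 * u))
      with (4 * sg ^ 2 * (u * (C1 - u)) + (C1 ^ 2 + 4 * (sg ^ 2 * u ^ 2 * (sg ^ 2 + 1)))) by ring.
    lra. }
  assert (2 * sg * s < C1 + 2 * sg ^ 2 * u).
  { apply Rnot_le_lt. intros Hle.
    assert ((C1 + 2 * sg ^ 2 * u) * (C1 + 2 * sg ^ 2 * u) <= (2 * sg * s) * (2 * sg * s))
      by (apply Rmult_le_compat; lra).
    lra. }
  split; lra.
Qed.

Lemma log_ratio_continuous (C1 sg u : R) : 0 < C1 -> 0 <= sg -> 0 <= u <= C1 ->
  continuous (log_ratio C1 sg) u.
Proof.
  intros HC1 Hsg Hu. destruct (log_ratio_args_pos C1 sg u HC1 Hsg Hu) as [Hm Hp].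
  unfold log_ratio.
  apply (continuous_Rminus (fun u => ln (C1 + 2 * sg ^ 2 * u + 2 * sg * semicircle C1 u))
           (fun u => ln (C1 + 2 * sg ^ 2 * u - 2 * sg * semicircle C1 u))).
  all: apply (continuous_comp _ ln); [|now apply continuous_ln].
  all: continuity_R; apply semicircle_continuous.
Qed.

Lemma log_ratio_ends (C1 sg : R) : log_ratio C1 sg 0 = 0 /\ log_ratio C1 sg C1 = 0.
Proof.
  destruct (semicircle_ends C1) as [H0 H1]. unfold log_ratio.
  rewrite H0, H1, !Rmult_0_r, !Rplus_0_r, !Rminus_0_r, !Rminus_diag. now split.
Qed.

Section LorentzWeight.
(* The Lorentzian weight [1 / (1 + lam u^2)] with [lam = w^2], written through
   [sx + i sy = sqrt (1 - i C1 w)]: here [sx > 0], [sg = |sy|], so that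
   [sx^2 = 1 + sg^2] and [C1^2 lam = 4 sx^2 sg^2]. *)
Variables C1 sx sg lam : R.
Hypothesis HC1 : 0 < C1.
Hypothesis Hsx : 0 < sx.
Hypothesis Hsg : 0 <= sg.
Hypothesis Hsxsg : sx ^ 2 = 1 + sg ^ 2.
Hypothesis Hlam : C1 ^ 2 * lam = 4 * sx ^ 2 * sg ^ 2.

Lemma lam_nonneg : 0 <= lam.
Proof.
  assert (0 < C1 ^ 2) by (apply pow_lt; lra).
  assert (0 <= 4 * sx ^ 2 * sg ^ 2)
    by (pose proof (pow2_ge_0 sx); pose proof (pow2_ge_0 sg); nra).
  nra.
Qed.

Lemma lorentz_pos (u : R) : 0 < 1 + lam * u ^ 2.
Proof. pose proof lam_nonneg. pose proof (pow2_ge_0 u). nra. Qed.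

(* The arc of [C1 - 2 sx^2 u + 2 i sx s(u)]: density of mass PI. *)
Lemma lorentz_arc_primitive :
  improper_primitive
    (fun u => sx * (C1 + 2 * sg ^ 2 * u) / (C1 * semicircle C1 u * (1 + lam * u ^ 2)))
    0 C1 PI.
Proof.
  apply (improper_primitive_ext (arc_density C1 C1 (2 * sx ^ 2) (2 * sx))).
  - intros u Hu. pose proof (semicircle_pos C1 u Hu) as Hs.
    pose proof (semicircle_sq C1 u ltac:(lra)) as Hs2.
    pose proof (lorentz_pos u).
    assert (Hlam' : lam = 4 * sx ^ 2 * sg ^ 2 / C1 ^ 2) by (rewrite <- Hlam; field; lra).
    unfold arc_density. clear Hs2. subst lam.
    replace (sg ^ 2) with (sx ^ 2 - 1) in * by lra.
    set (s := semicircle C1 u) in *. clearbody s.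
    replace ((C1 - 2 * sx ^ 2 * u) ^ 2 + (2 * sx) ^ 2 * (u * (C1 - u)))
      with (C1 ^ 2 * (1 + 4 * sx ^ 2 * (sx ^ 2 - 1) / C1 ^ 2 * u ^ 2)) by (field; lra).
    assert (0 < C1 ^ 2 * (1 + 4 * sx ^ 2 * (sx ^ 2 - 1) / C1 ^ 2 * u ^ 2))
      by (apply Rmult_lt_0_compat; [apply pow_lt|]; lra).
    field. repeat split; try lra.
    replace (C1 ^ 2 + 4 * sx ^ 2 * (sx ^ 2 - 1) * u ^ 2)
      with (C1 ^ 2 * (1 + 4 * sx ^ 2 * (sx ^ 2 - 1) / C1 ^ 2 * u ^ 2)) by (field; lra).
    lra.
  - apply arc_primitive; try lra.
    assert (0 < sx ^ 2 * C1) by (apply Rmult_lt_0_compat; [apply pow_lt|]; lra).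
    pose proof (pow2_ge_0 sg). nra.
Qed.

Lemma log_ratio_derive (u : R) : 0 < u < C1 ->
  is_derive (log_ratio C1 sg) u
    (2 * sg * (C1 - 2 * sx ^ 2 * u) / (C1 * semicircle C1 u * (1 + lam * u ^ 2))).
Proof.
  intros Hu. destruct (log_ratio_args_pos C1 sg u HC1 Hsg ltac:(lra)) as [Nm Np].
  pose proof (semicircle_derive C1 u Hu) as Hd.
  unfold log_ratio. auto_derive.
  - repeat split; try (eexists; eassumption); lra.
  - replace (Derive (fun x => semicircle C1 x) u) with ((C1 - 2 * u) / (2 * semicircle C1 u))
      by (symmetry; now apply is_derive_unique).
    assert (Hlam' : lam = 4 * sx ^ 2 * sg ^ 2 / C1 ^ 2) by (rewrite <- Hlam; field; lra).
    rewrite Hsxsg in Hlam'. subst lam. rewrite Hsxsg.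
    destruct (semicircle_param C1 u Hu) as [t [Ht [Hut Hst]]].
    rewrite Hst in *. clear Hd Hst. subst u.
    assert (Hp : 0 < 1 + t ^ 2) by (pose proof (pow2_ge_0 t); lra).
    field. repeat split; try lra.
    + assert (0 <= 4 * (1 + sg ^ 2) * sg ^ 2 * t ^ 4).
      { replace (t ^ 4) with ((t ^ 2) ^ 2) by ring.
        pose proof (pow2_ge_0 sg). pose proof (pow2_ge_0 (t ^ 2)).
        apply Rmult_le_pos; [apply Rmult_le_pos|]; lra. }
      assert (0 < (1 + t ^ 2) ^ 2) by (apply pow_lt; lra). lra.
    + replace (C1 * (1 + t ^ 2) + 2 * (sg * sg) * (C1 * t ^ 2) + - (2 * sg * (C1 * t)))
        with ((1 + t ^ 2) * (C1 + 2 * sg ^ 2 * (C1 * t ^ 2 / (1 + t ^ 2))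
                             - 2 * sg * (C1 * t / (1 + t ^ 2)))) by (field; lra).
      apply Rgt_not_eq, Rmult_lt_0_compat; lra.
    + replace (C1 * (1 + t ^ 2) + 2 * (sg * sg) * (C1 * t ^ 2) + 2 * sg * (C1 * t))
        with ((1 + t ^ 2) * (C1 + 2 * sg ^ 2 * (C1 * t ^ 2 / (1 + t ^ 2))
                             + 2 * sg * (C1 * t / (1 + t ^ 2)))) by (field; lra).
      apply Rgt_not_eq, Rmult_lt_0_compat; lra.
Qed.
(* The companion density has total mass 0: for [sg > 0] it is the derivative
   of [log_ratio / (2 sg)]; in the degenerate case [sg = 0] (so [sx = 1] and
   [lam = 0]) it is the derivative of [2 s(u) / C1]. Both primitives vanish
   at the two endpoints. *)
Lemma lorentz_log_primitive :
  improper_primitive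
    (fun u => (C1 - 2 * sx ^ 2 * u) / (C1 * semicircle C1 u * (1 + lam * u ^ 2)))
    0 C1 0.
Proof.
  destruct (semicircle_ends C1) as [Hs0 HsC1].
  destruct (Req_dec sg 0) as [Hsg0|Hsg0].
  - assert (Hsx1 : sx ^ 2 = 1) by (rewrite Hsxsg, Hsg0; ring).
    assert (Hlam0 : lam = 0).
    { subst sg. assert (0 < C1 ^ 2) by (apply pow_lt; lra). nra. }
    set (F := fun u => 2 * semicircle C1 u / C1).
    replace 0 with (F C1 - F 0) at 2 by (unfold F; rewrite Hs0, HsC1; field; lra).
    apply improper_primitive_of_pair; auto.
    + intros u Hu. pose proof (semicircle_pos C1 u Hu).
      rewrite Hsx1, Hlam0. unfold F.
      replace ((C1 - 2 * 1 * u) / (C1 * semicircle C1 u * (1 + 0 * u ^ 2)))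
        with (2 * ((C1 - 2 * u) / (2 * semicircle C1 u)) / C1) by (field; lra).
      apply is_derive_div_const, (is_derive_scal (semicircle C1)), semicircle_derive, Hu.
    + unfold F. continuity_R; [apply semicircle_continuous|lra].
    + unfold F. continuity_R; [apply semicircle_continuous|lra].
  - set (F := fun u => log_ratio C1 sg u / (2 * sg)).
    destruct (log_ratio_ends C1 sg) as [L0 LC1].
    replace 0 with (F C1 - F 0) at 2 by (unfold F; rewrite L0, LC1; field; lra).
    apply improper_primitive_of_pair; auto.
    + intros u Hu. unfold F.
      replace ((C1 - 2 * sx ^ 2 * u) / (C1 * semicircle C1 u * (1 + lam * u ^ 2)))
        with (2 * sg * (C1 - 2 * sx ^ 2 * u) / (C1 * semicircle C1 u * (1 + lam * u ^ 2))
              / (2 * sg)).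
      * apply is_derive_div_const, log_ratio_derive, Hu.
      * pose proof (semicircle_pos C1 u Hu). pose proof (lorentz_pos u).
        field. repeat split; lra.
    + unfold F. apply continuous_Rdiv; [|apply continuous_const|lra].
      apply log_ratio_continuous; lra.
    + unfold F. apply continuous_Rdiv; [|apply continuous_const|lra].
      apply log_ratio_continuous; lra.
Qed.
(* The two moments of the weight [1 / (s(u) (1 + lam u^2))] against [1] and
   [u]: they are the real-part data of [int du / ((1 - i w u) s(u))
   = PI / (sx + i sy)], obtained by combining the two densities above. *)
Lemma lorentz_moment0 :
  improper_primitive (fun u => 1 / (semicircle C1 u * (1 + lam * u ^ 2)))
    0 C1 (PI * sx / (sx ^ 2 + sg ^ 2)).
Proof.
  assert (Hm : 0 < sx ^ 2 + sg ^ 2) by (pose proof (pow2_ge_0 sg); pose proof (pow_lt sx 2 Hsx); lra).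
  replace (PI * sx / (sx ^ 2 + sg ^ 2))
    with (sx / (sx ^ 2 + sg ^ 2) * PI + sg ^ 2 / (sx ^ 2 + sg ^ 2) * 0) by (field; lra).
  eapply improper_primitive_ext;
    [|apply improper_primitive_plus; apply improper_primitive_scal;
      [apply lorentz_arc_primitive|apply lorentz_log_primitive]].
  intros u Hu. pose proof (semicircle_pos C1 u Hu). pose proof (lorentz_pos u).
  cbv beta. field. repeat split; lra.
Qed.

Lemma lorentz_moment1 :
  improper_primitive (fun u => u / (semicircle C1 u * (1 + lam * u ^ 2)))
    0 C1 (PI * C1 / (2 * sx * (sx ^ 2 + sg ^ 2))).
Proof.
  assert (Hm : 0 < sx ^ 2 + sg ^ 2) by (pose proof (pow2_ge_0 sg); pose proof (pow_lt sx 2 Hsx); lra).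
  replace (PI * C1 / (2 * sx * (sx ^ 2 + sg ^ 2)))
    with (C1 / (2 * sx * (sx ^ 2 + sg ^ 2)) * PI + - (C1 / (2 * (sx ^ 2 + sg ^ 2))) * 0)
    by (field; lra).
  eapply improper_primitive_ext;
    [|apply improper_primitive_plus; apply improper_primitive_scal;
      [apply lorentz_arc_primitive|apply lorentz_log_primitive]].
  intros u Hu. pose proof (semicircle_pos C1 u Hu). pose proof (lorentz_pos u).
  cbv beta. field. repeat split; lra.
Qed.
End LorentzWeight.

Definition xi_p (C1 C2 : R) : R := (C1 + sqrt (C1 ^ 2 + 4 * C2 ^ 2)) / 2.
Definition spectral_density (C1 C2 u : R) : R :=
  C2 * sqrt (u * (C1 - u)) / (PI * (C2 ^ 2 + u * (C1 - u))).
Definition atom_weight (C1 C2 : R) : R :=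
  2 * C2 * sqrt (xi_p C1 C2 * (xi_p C1 C2 - C1)) / (2 * xi_p C1 C2 - C1).

Lemma xi_p_root (C1 C2 : R) : 0 < C1 -> 0 < C2 ->
  C1 < xi_p C1 C2 /\ xi_p C1 C2 * (xi_p C1 C2 - C1) = C2 ^ 2.
Proof.
  intros HC1 HC2. unfold xi_p.
  assert (HD : 0 <= C1 ^ 2 + 4 * C2 ^ 2) by (pose proof (pow2_ge_0 C1); pose proof (pow2_ge_0 C2); lra).
  pose proof (sqrt_sqrt _ HD) as HD2. pose proof (sqrt_pos (C1 ^ 2 + 4 * C2 ^ 2)).
  set (D := sqrt (C1 ^ 2 + 4 * C2 ^ 2)) in *. clearbody D.
  assert (0 < C2 ^ 2) by (apply pow_lt; lra).
  split; [nra|]. replace ((C1 + D) / 2 * ((C1 + D) / 2 - C1)) with ((D * D - C1 ^ 2) / 4) by field.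
  rewrite HD2. field.
Qed.

Lemma atom_weight_eq (C1 C2 : R) : 0 < C1 -> 0 < C2 ->
  atom_weight C1 C2 = 2 * C2 ^ 2 / (2 * xi_p C1 C2 - C1).
Proof.
  intros HC1 HC2. destruct (xi_p_root C1 C2 HC1 HC2) as [Hlt Hq].
  unfold atom_weight. rewrite Hq, sqrt_pow2 by lra. field. lra.
Qed.

Lemma sum_sq_neq0 (a b : R) : a <> 0 -> a ^ 2 + b ^ 2 <> 0.
Proof.
  intros Ha. pose proof (pow2_ge_0 b).
  assert (0 < a ^ 2) by (rewrite <- Rsqr_pow2; now apply Rsqr_pos_lt). lra.
Qed.

Ltac nonzero := repeat match goal with
  | |- _ ^ 2 + _ ^ 2 <> 0 => apply sum_sq_neq0
  | |- _ * _ <> 0 => apply Rmult_integral_contrapositive_currified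
  | |- - _ <> 0 => apply Ropp_neq_0_compat
  | |- _ ^ _ <> 0 => apply pow_nonzero
  | |- _ <> 0 => nra
  end.

(* [u * (p u / u) = p u] also at [u = 0] when [p 0 = 0] (division by zero
   being total). *)
Lemma mul_div_self (p : R -> R) (u : R) : p 0 = 0 -> u * (p u / u) = p u.
Proof.
  intros H0. destruct (Req_dec u 0) as [->|Hu].
  - rewrite H0. unfold Rdiv. ring.
  - field. exact Hu.
Qed.

Lemma Cdiv_one_minus_i (a x : R) :
  Cdiv (RtoC a) (Cminus (RtoC 1) (Cmult Ci (RtoC x)))
  = (a / (1 + x ^ 2), a * x / (1 + x ^ 2)).
Proof.
  unfold Cdiv, Cmult, Cinv, Cminus, Cplus, Copp, RtoC, Ci. cbn [fst snd].
  assert (0 < 1 + x ^ 2) by (pose proof (pow2_ge_0 x); lra).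
  f_equal; field; nra.
Qed.

Lemma Csqrt_one_minus_i (x : R) :
  let z := Csqrt (Cminus (RtoC 1) (Cmult Ci (RtoC x))) in
  0 < fst z /\ fst z ^ 2 - snd z ^ 2 = 1 /\ 2 * fst z * snd z = - x.
Proof.
  intros z. unfold z, Csqrt, Cmod, Cminus, Cplus, Copp, Cmult, RtoC, Ci. cbn [fst snd].
  replace ((1 + - (0 * x - 1 * 0)) * (1 + - (0 * x - 1 * 0))
           + (0 + - (0 * 0 + 1 * x)) * (0 + - (0 * 0 + 1 * x))) with (1 + x ^ 2) by ring.
  replace (1 + - (0 * x - 1 * 0)) with 1 by ring.
  replace (0 + - (0 * 0 + 1 * x)) with (- x) by ring.
  assert (Hx2 : 0 <= x ^ 2) by apply pow2_ge_0.
  pose proof (sqrt_sqrt (1 + x ^ 2) ltac:(lra)) as Hm2.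
  pose proof (sqrt_pos (1 + x ^ 2)) as Hm0.
  set (m := sqrt (1 + x ^ 2)) in *. clearbody m.
  assert (Hm1 : 1 <= m) by nra.
  pose proof (pow2_sqrt ((m + 1) / 2) ltac:(lra)) as Hp.
  pose proof (pow2_sqrt ((m - 1) / 2) ltac:(lra)) as Hn.
  pose proof (sqrt_pos ((m - 1) / 2)) as Hn0.
  pose proof (sqrt_pos ((m + 1) / 2)) as Hp0.
  set (a := sqrt ((m + 1) / 2)) in *. set (b := sqrt ((m - 1) / 2)) in *.
  assert (Hab : 2 * a * b = Rabs x).
  { apply Rsqr_inj; [|apply Rabs_pos|].
    - apply Rmult_le_pos; lra.
    - rewrite <- Rsqr_abs. unfold Rsqr.
      replace (2 * a * b * (2 * a * b)) with (4 * a ^ 2 * b ^ 2) by ring.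
      rewrite Hp, Hn. nra. }
  split; [apply sqrt_lt_R0; lra|split].
  - replace (((if Rlt_dec (- x) 0 then -1 else 1) * b) ^ 2) with (b ^ 2)
      by (destruct (Rlt_dec (- x) 0); ring).
    rewrite Hp, Hn. field.
  - destruct (Rlt_dec (- x) 0).
    + rewrite Rabs_right in Hab by lra. lra.
    + rewrite Rabs_left1 in Hab by lra. lra.
Qed.

Lemma spectral_density_at_0 (C1 C2 : R) : spectral_density C1 C2 0 = 0.
Proof. unfold spectral_density. rewrite Rmult_0_l, sqrt_0. unfold Rdiv. ring. Qed.

Section SpectralData.
Variables C1 C2 xi : R.
Hypothesis HC1 : 0 < C1.
Hypothesis HC2 : 0 < C2.
Hypothesis Hxi : C1 < xi.
Hypothesis Hroot : xi * (xi - C1) = C2 ^ 2.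

Lemma quadratic_factor (u : R) : C2 ^ 2 + u * (C1 - u) = (xi - u) * (u - (C1 - xi)).
Proof. rewrite <- Hroot. ring. Qed.

Lemma two_pole_primitive (A B : R) :
  improper_primitive (fun u => (A / (xi - u) + B / ((C1 - xi) - u)) / semicircle C1 u)
    0 C1 ((A - B) * PI / C2).
Proof.
  assert (Hk1 : (C2 / xi) ^ 2 * xi = xi - C1).
  { replace ((C2 / xi) ^ 2 * xi) with (xi * (xi - C1) / xi) by (rewrite Hroot; field; lra).
    field. lra. }
  assert (Hk2 : (xi / C2) ^ 2 * (C1 - xi) = (C1 - xi) - C1).
  { replace ((xi / C2) ^ 2 * (C1 - xi)) with (- xi * (xi * (xi - C1)) / C2 ^ 2)
      by (field; lra).
    rewrite Hroot. field. lra. }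
  pose proof (pole_primitive C1 xi (C2 / xi) HC1 ltac:(apply Rdiv_lt_0_compat; lra) Hk1) as P1.
  pose proof (pole_primitive C1 (C1 - xi) (xi / C2) HC1 ltac:(apply Rdiv_lt_0_compat; lra) Hk2) as P2.
  replace ((A - B) * PI / C2) with (A * (PI / (C2 / xi * xi)) + B * (PI / (xi / C2 * (C1 - xi)))).
  - eapply improper_primitive_ext;
      [|apply improper_primitive_plus; apply improper_primitive_scal; [exact P1|exact P2]].
    intros u Hu. pose proof (semicircle_pos C1 u Hu). cbv beta. field. repeat split; lra.
  - replace (xi / C2 * (C1 - xi)) with (- (xi * (xi - C1)) / C2) by (field; lra).
    rewrite Hroot. field. lra.
Qed.

Lemma quadratic_factor_pos (u : R) : 0 <= u <= C1 -> 0 < C2 ^ 2 + u * (C1 - u).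
Proof. intros Hu. pose proof (pow_lt C2 2 HC2). nra. Qed.

Lemma spectral_density_continuous (u : R) : 0 <= u <= C1 -> continuous (spectral_density C1 C2) u.
Proof.
  intros Hu. unfold spectral_density. pose proof PI_RGT_0. pose proof (quadratic_factor_pos u Hu).
  continuity_R. apply Rgt_not_eq, Rmult_lt_0_compat; lra.
Qed.

Lemma spectral_density_over_u_poles (u : R) : 0 < u < C1 ->
  spectral_density C1 C2 u / u =
  (C2 / PI * (C1 - xi) / (2 * xi - C1) / (xi - u)
   + - (C2 / PI) * xi / (2 * xi - C1) / ((C1 - xi) - u)) / semicircle C1 u.
Proof.
  intros Hu. pose proof (semicircle_pos C1 u Hu) as Hs.
  pose proof (semicircle_sq C1 u ltac:(lra)) as Hs2. pose proof PI_RGT_0.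
  unfold spectral_density. fold (semicircle C1 u). rewrite quadratic_factor.
  replace (C2 * semicircle C1 u / (PI * ((xi - u) * (u - (C1 - xi)))) / u)
    with (C2 * (semicircle C1 u * semicircle C1 u)
          / (PI * ((xi - u) * (u - (C1 - xi))) * u * semicircle C1 u)) by (field; nra).
  rewrite Hs2. field. repeat split; nra.
Qed.

Lemma absolutely_continuous_mass :
  improper_int_at0 (fun u => spectral_density C1 C2 u / u) C1 (1 - 2 * C2 ^ 2 / (2 * xi - C1) / xi).
Proof.
  apply improper_int_at0_of_primitive; [exact HC1| |].
  - intros u Hu. apply continuous_Rdiv; [apply spectral_density_continuous; lra|apply continuous_id|lra].
  - replace (1 - 2 * C2 ^ 2 / (2 * xi - C1) / xi)
      with ((C2 / PI * (C1 - xi) / (2 * xi - C1) - - (C2 / PI) * xi / (2 * xi - C1)) * PI / C2)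
      by (rewrite <- Hroot; pose proof PI_RGT_0; field; repeat split; lra).
    eapply improper_primitive_ext; [|apply two_pole_primitive].
    intros u Hu. symmetry. now apply spectral_density_over_u_poles.
Qed.

Section Frequency.
(* A frequency [w], and [sx + i sy = sqrt (1 - i C1 w)]. *)
Variables w sx sy : R.
Hypothesis Hsx : 0 < sx.
Hypothesis Hsxy : sx ^ 2 - sy ^ 2 = 1.
Hypothesis Hw : 2 * sx * sy = - (C1 * w).

Lemma spectral_primitive (A B c0 c1 : R) :
  improper_primitive
    (fun u => (A / (xi - u) + B / ((C1 - xi) - u) + (c0 + c1 * u) / (1 + w ^ 2 * u ^ 2))
              / semicircle C1 u)
    0 C1 ((A - B) * PI / C2 + c0 * (PI * sx / (sx ^ 2 + sy ^ 2))
          + c1 * (PI * C1 / (2 * sx * (sx ^ 2 + sy ^ 2)))).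
Proof.
  assert (Hsg2 : Rabs sy ^ 2 = sy ^ 2) by apply pow2_abs.
  assert (Hsxsg : sx ^ 2 = 1 + Rabs sy ^ 2) by lra.
  assert (Hlam : C1 ^ 2 * w ^ 2 = 4 * sx ^ 2 * Rabs sy ^ 2)
    by (rewrite Hsg2; replace (C1 ^ 2 * w ^ 2) with ((- (C1 * w)) ^ 2) by ring;
        rewrite <- Hw; ring).
  pose proof (lorentz_moment0 C1 sx (Rabs sy) (w ^ 2) HC1 Hsx (Rabs_pos sy) Hsxsg Hlam) as M0.
  pose proof (lorentz_moment1 C1 sx (Rabs sy) (w ^ 2) HC1 Hsx (Rabs_pos sy) Hsxsg Hlam) as M1.
  rewrite Hsg2 in M0, M1.
  eapply improper_primitive_ext;
    [|apply improper_primitive_plus; [apply improper_primitive_plus|];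
        [apply two_pole_primitive|apply improper_primitive_scal, M0|
         apply improper_primitive_scal, M1]].
  intros u Hu. pose proof (semicircle_pos C1 u Hu).
  pose proof (lorentz_pos C1 sx (Rabs sy) (w ^ 2) HC1 Hlam u).
  cbv beta. field. repeat split; lra.
Qed.

Let xp := C1 - xi.
Let a1 := 1 / ((xi - xp) * (1 + w ^ 2 * xi ^ 2)).
Let a2 := 1 / ((xi - xp) * (1 + w ^ 2 * xp ^ 2)).

Lemma re_partial_fractions (u : R) : 0 < u < C1 ->
  spectral_density C1 C2 u / (1 + w ^ 2 * u ^ 2) =
  (C2 / PI * xi * xp * a1 / (xi - u) + - (C2 / PI) * xi * xp * a2 / (xp - u)
   + (C2 / PI * (a2 * xi - a1 * xp) + C2 / PI * xi * xp * w ^ 2 * (a1 - a2) * u)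
     / (1 + w ^ 2 * u ^ 2)) / semicircle C1 u.
Proof.
  intros Hu. pose proof (semicircle_pos C1 u Hu) as Hs.
  pose proof (semicircle_sq C1 u ltac:(lra)) as Hs2. pose proof PI_RGT_0.
  assert (xp < 0) by (unfold xp; lra). pose proof (pow2_ge_0 (w * u)). pose proof (pow2_ge_0 (w * xi)).
  pose proof (pow2_ge_0 (w * xp)).
  unfold spectral_density. fold (semicircle C1 u). rewrite quadratic_factor. fold xp.
  replace (C2 * semicircle C1 u / (PI * ((xi - u) * (u - xp))) / (1 + w ^ 2 * u ^ 2))
    with (C2 * (semicircle C1 u * semicircle C1 u)
          / (PI * ((xi - u) * (u - xp)) * (1 + w ^ 2 * u ^ 2) * semicircle C1 u))
    by (field; repeat split; nra).
  rewrite Hs2. replace (u * (C1 - u)) with (u * (xi + xp - u)) by (unfold xp; ring).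
  unfold a1, a2. field. repeat split; nra.
Qed.

Lemma im_partial_fractions (u : R) : 0 < u < C1 ->
  w * u * spectral_density C1 C2 u / (1 + w ^ 2 * u ^ 2) =
  (w * C2 / PI * xi * xp * xi * a1 / (xi - u) + - (w * C2 / PI) * xi * xp * xp * a2 / (xp - u)
   + (w * C2 / PI * xi * xp * (a2 - a1) + w * C2 / PI * (a2 * xi - a1 * xp) * u)
     / (1 + w ^ 2 * u ^ 2)) / semicircle C1 u.
Proof.
  intros Hu. pose proof (semicircle_pos C1 u Hu) as Hs.
  pose proof (semicircle_sq C1 u ltac:(lra)) as Hs2. pose proof PI_RGT_0.
  assert (xp < 0) by (unfold xp; lra). pose proof (pow2_ge_0 (w * u)). pose proof (pow2_ge_0 (w * xi)).
  pose proof (pow2_ge_0 (w * xp)).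
  unfold spectral_density. fold (semicircle C1 u). rewrite quadratic_factor. fold xp.
  replace (w * u * (C2 * semicircle C1 u / (PI * ((xi - u) * (u - xp)))) / (1 + w ^ 2 * u ^ 2))
    with (w * u * C2 * (semicircle C1 u * semicircle C1 u)
          / (PI * ((xi - u) * (u - xp)) * (1 + w ^ 2 * u ^ 2) * semicircle C1 u))
    by (field; repeat split; nra).
  rewrite Hs2. replace (u * (C1 - u)) with (u * (xi + xp - u)) by (unfold xp; ring).
  unfold a1, a2. field. repeat split; nra.
Qed.

(* Parametrising [sx = (q + 1/q) / 2], [sy = (q - 1/q) / 2] with
   [q = sx + sy > 0], and [C1 = xi - C2^2 / xi], every quantity becomes
   rational in [xi, C2, q]. *)
Lemma frequency_param :
  exists q, 0 < q /\ sx = (q + / q) / 2 /\ sy = (q - / q) / 2.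
Proof.
  assert (Hq : 0 < sx + sy).
  { destruct (Rle_dec 0 sy); [lra|]. assert (sy ^ 2 < sx ^ 2) by lra. nra. }
  exists (sx + sy).
  assert (Hd : sx - sy = / (sx + sy)).
  { apply (Rmult_eq_reg_l (sx + sy)); [|lra]. rewrite Rinv_r by lra. lra. }
  split; [exact Hq|split]; rewrite <- Hd; field.
Qed.

Lemma real_part_identity :
  (C2 / PI * xi * xp * a1 - - (C2 / PI) * xi * xp * a2) * PI / C2
  + C2 / PI * (a2 * xi - a1 * xp) * (PI * sx / (sx ^ 2 + sy ^ 2))
  + C2 / PI * xi * xp * w ^ 2 * (a1 - a2) * (PI * C1 / (2 * sx * (sx ^ 2 + sy ^ 2)))
  = C2 * sx / (sx ^ 2 + (sy - C2 * w) ^ 2)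
    - 2 * C2 ^ 2 / (2 * xi - C1) / (1 + w ^ 2 * xi ^ 2).
Proof.
  destruct frequency_param as [q [Hq [Hsxq Hsyq]]].
  assert (Hwq : w = - (2 * sx * sy) / C1) by (rewrite Hw; field; lra).
  assert (HC1q : C1 = xi - C2 ^ 2 / xi) by (rewrite <- Hroot; field; lra).
  unfold a1, a2, xp. rewrite Hwq, Hsxq, Hsyq, HC1q.
  pose proof PI_RGT_0.
  assert (Hx0 : 0 < xi * xi - C2 ^ 2) by nra.
  field. repeat split; try lra; try nonzero.
Qed.

Lemma imaginary_part_identity :
  (w * C2 / PI * xi * xp * xi * a1 - - (w * C2 / PI) * xi * xp * xp * a2) * PI / C2
  + w * C2 / PI * xi * xp * (a2 - a1) * (PI * sx / (sx ^ 2 + sy ^ 2))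
  + w * C2 / PI * (a2 * xi - a1 * xp) * (PI * C1 / (2 * sx * (sx ^ 2 + sy ^ 2)))
  = - C2 * (sy - C2 * w) / (sx ^ 2 + (sy - C2 * w) ^ 2)
    - 2 * C2 ^ 2 / (2 * xi - C1) * (w * xi) / (1 + w ^ 2 * xi ^ 2).
Proof.
  destruct frequency_param as [q [Hq [Hsxq Hsyq]]].
  assert (Hwq : w = - (2 * sx * sy) / C1) by (rewrite Hw; field; lra).
  assert (HC1q : C1 = xi - C2 ^ 2 / xi) by (rewrite <- Hroot; field; lra).
  unfold a1, a2, xp. rewrite Hwq, Hsxq, Hsyq, HC1q.
  pose proof PI_RGT_0.
  assert (Hx0 : 0 < xi * xi - C2 ^ 2) by nra.
  field. repeat split; try lra; try nonzero.
Qed.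

Lemma lorentz_weight_pos (u : R) : 0 < 1 + w ^ 2 * u ^ 2.
Proof. pose proof (pow2_ge_0 (w * u)). nra. Qed.

Lemma re_integral :
  is_RInt (fun u => spectral_density C1 C2 u / (1 + w ^ 2 * u ^ 2)) 0 C1
    ((C2 / PI * xi * xp * a1 - - (C2 / PI) * xi * xp * a2) * PI / C2
     + C2 / PI * (a2 * xi - a1 * xp) * (PI * sx / (sx ^ 2 + sy ^ 2))
     + C2 / PI * xi * xp * w ^ 2 * (a1 - a2) * (PI * C1 / (2 * sx * (sx ^ 2 + sy ^ 2)))).
Proof.
  apply is_RInt_improper_primitive; [exact HC1| |].
  - intros u Hu. pose proof (lorentz_weight_pos u).
    apply continuous_Rdiv; [apply spectral_density_continuous; lra|continuity_R|lra].
  - eapply improper_primitive_ext; [|apply spectral_primitive].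
    intros u Hu. symmetry. now apply re_partial_fractions.
Qed.

Lemma im_integral :
  is_RInt (fun u => w * u * spectral_density C1 C2 u / (1 + w ^ 2 * u ^ 2)) 0 C1
    ((w * C2 / PI * xi * xp * xi * a1 - - (w * C2 / PI) * xi * xp * xp * a2) * PI / C2
     + w * C2 / PI * xi * xp * (a2 - a1) * (PI * sx / (sx ^ 2 + sy ^ 2))
     + w * C2 / PI * (a2 * xi - a1 * xp) * (PI * C1 / (2 * sx * (sx ^ 2 + sy ^ 2)))).
Proof.
  apply is_RInt_improper_primitive; [exact HC1| |].
  - intros u Hu. pose proof (lorentz_weight_pos u).
    apply continuous_Rdiv; [|continuity_R|lra].
    apply continuous_Rmult; [continuity_R|apply spectral_density_continuous; lra].
  - eapply improper_primitive_ext; [|apply spectral_primitive].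
    intros u Hu. symmetry. now apply im_partial_fractions.
Qed.

Lemma representation_at_frequency :
  let gre := fun u => Cre (Cdiv (RtoC (u * (spectral_density C1 C2 u / u)))
                                (Cminus (RtoC 1) (Cmult Ci (RtoC (w * u))))) in
  let gim := fun u => Cim (Cdiv (RtoC (u * (spectral_density C1 C2 u / u)))
                                (Cminus (RtoC 1) (Cmult Ci (RtoC (w * u))))) in
  exists (pre : Riemann_integrable gre 0 C1) (pim : Riemann_integrable gim 0 C1),
    Cdiv (RtoC C2) (Cminus (sx, sy) (Cmult Ci (RtoC (C2 * w)))) =
    Cplus (RiemannInt pre, RiemannInt pim)
      (Cdiv (RtoC (xi * (2 * C2 ^ 2 / (2 * xi - C1) / xi)))
            (Cminus (RtoC 1) (Cmult Ci (RtoC (w * xi))))).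
Proof.
  intros gre gim.
  assert (Egre : forall u, Rmin 0 C1 < u < Rmax 0 C1 ->
            spectral_density C1 C2 u / (1 + w ^ 2 * u ^ 2) = gre u).
  { intros u _. unfold gre. rewrite mul_div_self, Cdiv_one_minus_i by apply spectral_density_at_0.
    unfold Cre. cbn [fst]. unfold Rdiv. rewrite Rpow_mult_distr. ring. }
  assert (Egim : forall u, Rmin 0 C1 < u < Rmax 0 C1 ->
            w * u * spectral_density C1 C2 u / (1 + w ^ 2 * u ^ 2) = gim u).
  { intros u _. unfold gim. rewrite mul_div_self, Cdiv_one_minus_i by apply spectral_density_at_0.
    unfold Cim. cbn [snd]. unfold Rdiv. rewrite Rpow_mult_distr. ring. }
  pose proof (is_RInt_ext _ _ _ _ _ Egre re_integral) as Hre.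
  pose proof (is_RInt_ext _ _ _ _ _ Egim im_integral) as Him.
  exists (ex_RInt_Reals_0 _ _ _ (ex_intro _ _ Hre)), (ex_RInt_Reals_0 _ _ _ (ex_intro _ _ Him)).
  rewrite <- !RInt_Reals, (is_RInt_unique _ _ _ _ Hre), (is_RInt_unique _ _ _ _ Him).
  rewrite real_part_identity, imaginary_part_identity, Cdiv_one_minus_i.
  unfold Cdiv, Cmult, Cinv, Cminus, Cplus, Copp, RtoC, Ci. cbn [fst snd].
  assert (0 < sx ^ 2 + (sy - C2 * w) ^ 2)
    by (pose proof (pow_lt sx 2 Hsx); pose proof (pow2_ge_0 (sy - C2 * w)); lra).
  pose proof (lorentz_weight_pos xi).
  f_equal; field; repeat split; try lra; nra.
Qed.
End Frequency.
End SpectralData.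

Lemma KD_reduced (phi alpha_inf K0 eta rho_f Lambda omega : R) :
  0 < phi -> 0 < alpha_inf -> 0 < eta -> 0 < rho_f -> 0 < Lambda ->
  let nu := eta / rho_f in
  let F := alpha_inf / phi in
  let C2 := F * K0 / nu in
  let C1 := 4 * C2 * F * K0 / Lambda ^ 2 in
  KD phi alpha_inf K0 eta rho_f Lambda omega =
  Cmult (RtoC (nu / F))
    (Cdiv (RtoC C2) (Cminus (Csqrt (Cminus (RtoC 1) (Cmult Ci (RtoC (C1 * omega)))))
                            (Cmult Ci (RtoC (C2 * omega))))).
Proof.
  intros hphi halpha heta hrho hLambda nu F C2 C1. unfold KD.
  replace (4 * alpha_inf ^ 2 * K0 ^ 2 * rho_f * omega / (eta * Lambda ^ 2 * phi ^ 2))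
    with (C1 * omega) by (unfold C1, C2, F, nu; field; repeat split; lra).
  replace (alpha_inf * K0 * rho_f * omega / (eta * phi))
    with (C2 * omega) by (unfold C2, F, nu; field; repeat split; lra).
  unfold Cdiv, Cmult, RtoC. cbn [fst snd].
  assert (HK0 : K0 = nu / F * C2) by (unfold C2, F, nu; field; repeat split; lra).
  rewrite HK0. f_equal; ring.
Qed.

Lemma spectral_density_nonneg (C1 C2 u : R) : 0 < C2 -> 0 < u <= C1 ->
  0 <= spectral_density C1 C2 u / u.
Proof.
  intros HC2 Hu. unfold spectral_density. pose proof PI_RGT_0.
  pose proof (sqrt_pos (u * (C1 - u))). pose proof (pow_lt C2 2 HC2).
  assert (0 < PI * (C2 ^ 2 + u * (C1 - u))) by (apply Rmult_lt_0_compat; nra).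
  apply Rdiv_le_0_compat; [|lra]. apply Rdiv_le_0_compat; nra.
Qed.

Theorem mainTheorem1 (phi alpha_inf K0 eta rho_f Lambda : R)
  (hphi : 0 < phi < 1) (halpha : 0 < alpha_inf) (hK0 : 0 < K0)
  (heta : 0 < eta) (hrho : 0 < rho_f) (hLambda : 0 < Lambda) :
  let nu := eta / rho_f in
  let F := alpha_inf / phi in
  let C2 := F * K0 / nu in
  let C1 := 4 * C2 * F * K0 / Lambda ^ 2 in
  let xi_p := (C1 + sqrt (C1 ^ 2 + 4 * C2 ^ 2)) / 2 in
  let psi := fun u : R =>
    C2 * sqrt (u * (C1 - u)) / (PI * (C2 ^ 2 + u * (C1 - u))) in
  let r := 2 * C2 * sqrt (xi_p * (xi_p - C1)) / (2 * xi_p - C1) in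
  C1 < xi_p /\
  (* dG is a probability measure on [0, xi_p]: nonnegative, total mass 1 *)
  ((forall u, 0 < u <= C1 -> 0 <= psi u / u) /\ 0 <= r / xi_p /\
   improper_int_at0 (fun u => psi u / u) C1 (1 - r / xi_p)) /\
  (* representation formula, for every real omega *)
  (forall omega : R,
     let gre := fun u => Cre (Cdiv (RtoC (u * (psi u / u)))
                                   (Cminus (RtoC 1) (Cmult Ci (RtoC (omega * u))))) in
     let gim := fun u => Cim (Cdiv (RtoC (u * (psi u / u)))
                                   (Cminus (RtoC 1) (Cmult Ci (RtoC (omega * u))))) in
     exists (pre : Riemann_integrable gre 0 C1) (pim : Riemann_integrable gim 0 C1),
       KD phi alpha_inf K0 eta rho_f Lambda omega =
       Cmult (RtoC (nu / F))
         (Cplus (RiemannInt pre, RiemannInt pim)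
            (Cdiv (RtoC (xi_p * (r / xi_p)))
                  (Cminus (RtoC 1) (Cmult Ci (RtoC (omega * xi_p))))))).
Proof.
  intros nu F C2 C1 xi psi r.
  assert (HF : 0 < F) by (apply Rdiv_lt_0_compat; lra).
  assert (Hnu : 0 < nu) by (apply Rdiv_lt_0_compat; lra).
  assert (HC2 : 0 < C2) by (apply Rdiv_lt_0_compat; [apply Rmult_lt_0_compat|]; lra).
  assert (HC1 : 0 < C1)
    by (apply Rdiv_lt_0_compat;
        [apply Rmult_lt_0_compat; [apply Rmult_lt_0_compat; [apply Rmult_lt_0_compat|]|]
        |apply pow_lt]; lra).
  destruct (xi_p_root C1 C2 HC1 HC2) as [Hxi Hroot].
  change (xi_p C1 C2) with xi in Hxi, Hroot.
  assert (Hr : r = 2 * C2 ^ 2 / (2 * xi - C1)) by exact (atom_weight_eq C1 C2 HC1 HC2).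
  split; [exact Hxi|split; [split; [|split]|]].
  - intros u Hu. exact (spectral_density_nonneg C1 C2 u HC2 Hu).
  - rewrite Hr. apply Rdiv_le_0_compat; [|lra]. apply Rdiv_le_0_compat; [|lra].
    pose proof (pow2_ge_0 C2). lra.
  - rewrite Hr. exact (absolutely_continuous_mass C1 C2 xi HC1 HC2 Hxi Hroot).
  - intros omega gre gim.
    destruct (Csqrt_one_minus_i (C1 * omega)) as [Hsx [Hsxy Hw]].
    destruct (representation_at_frequency C1 C2 xi HC1 HC2 Hxi Hroot omega _ _ Hsx Hsxy Hw)
      as [pre [pim Hrep]].
    exists pre, pim.
    rewrite <- surjective_pairing in Hrep.
    transitivity (Cmult (RtoC (nu / F)) (Cdiv (RtoC C2)
      (Cminus (Csqrt (Cminus (RtoC 1) (Cmult Ci (RtoC (C1 * omega)))))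
              (Cmult Ci (RtoC (C2 * omega)))))).
    + apply KD_reduced; lra.
    + rewrite Hrep, Hr. reflexivity.
Qed.
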